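(* Let $0<R<\infty$ and let $f(x)=\sum_{n=0}^\infty a_nx^n$ with $a_n>0$ for all $n$ be convergent on $(-R,R)$. Define $m(x)=f(R-x^2/R)/f(x^2/R)$ for $x\in(0,R)$. If the sequence $\{R(n+1)a_{n+1}/a_n-n\}_{n\ge0}$ is decreasing, then $$\frac{1}{m\big(\sqrt[4]{(R^2-x^2)(R^2-y^2)}\big)}\le\sqrt{m(x)m(y)}\le m(\sqrt{xy})$$ for all $x,y\in(0,R)$, with equality if and only if $x=y$. *)

From Stdlib Require Import Reals.
From Coquelicot Require Import Coquelicot.
Open Scope R_scope.

Definition mfun (a : nat -> R) (R0 : R) (x : R) : R :=
  PSeries a (R0 - x ^ 2 / R0) / PSeries a (x ^ 2 / R0).

(** Put [u = x^2/R], [w = y^2/R] and [g = xy/R], so that [g^2 = uw] and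
    [m(x) = f(R - u) / f(u)].  The right inequality is the quotient of two
    comparisons with the geometric mean:
    - [f(g)^2 <= f(u) f(w)], strictly if [u <> w]: on partial sums the gap
      [f_N(u) f_N(w) - f_N(g)^2] increases with [N], by AM-GM applied to the
      pairs [u^p w^k, w^p u^k];
    - [f(R - u) f(R - w) <= f(R - g)^2]: the function [t |-> ln f(R - e^t)]
      is concave, since its derivative at [t] is [-(R - v) f'(v) / f(v)] with
      [v = R - e^t], and [(R - v) f'(v) = sum_k c_k a_k v^k] where [c_k] is the
      decreasing sequence of the hypothesis; a mean of a decreasing sequence
      with weights [a_k v^k] decreases in [v] (Chebyshev).
    The left inequality is the right one at [sqrt(R^2 - x^2)] and
    [sqrt(R^2 - y^2)], because [m(sqrt(R^2 - x^2)) = 1 / m(x)]. *)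

From Stdlib Require Import Reals Lra Lia Psatz.
From Coquelicot Require Import Coquelicot.
Open Scope R_scope.

Lemma two_mul_le_add_of_sqr_eq_mul (A B C : R) :
  0 <= A -> 0 <= B -> 0 <= C -> C ^ 2 = A * B -> 2 * C <= A + B.
Proof.
  intros hA hB hC e.
  assert (Hsq : (A + B) ^ 2 - (2 * C) ^ 2 = (A - B) ^ 2)
    by (replace ((2 * C) ^ 2) with (4 * C ^ 2) by ring; rewrite e; ring).
  destruct (Rle_or_lt (2 * C) (A + B)) as [|hlt]; auto.
  pose proof (pow2_ge_0 (A - B)). nra.
Qed.

Lemma pow_mix_geomean_le (u w g : R) (p k : nat) :
  0 <= u -> 0 <= w -> 0 <= g -> g * g = u * w ->
  2 * (g ^ p * g ^ k) <= u ^ p * w ^ k + w ^ p * u ^ k.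
Proof.
  intros hu hw hg e.
  apply two_mul_le_add_of_sqr_eq_mul; try apply Rmult_le_pos; try apply pow_le; auto.
  rewrite !Rpow_mult_distr, <- !pow_mult, !(Nat.mul_comm _ 2), !pow_mult.
  simpl pow; rewrite !Rmult_1_r, e, !Rpow_mult_distr; ring.
Qed.

Lemma pow_cross_nonneg (v w : R) (k p : nat) :
  0 <= v <= w -> (k <= p)%nat -> 0 <= w ^ p * v ^ k - v ^ p * w ^ k.
Proof.
  intros hvw hkp. replace p with (k + (p - k))%nat by lia. rewrite !pow_add.
  assert (v ^ (p - k) <= w ^ (p - k)) by (apply pow_incr; lra).
  assert (0 <= v ^ k * w ^ k) by (apply Rmult_le_pos; apply pow_le; lra).
  replace (w ^ k * w ^ (p - k) * v ^ k - v ^ k * v ^ (p - k) * w ^ k)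
    with (v ^ k * w ^ k * (w ^ (p - k) - v ^ (p - k))) by ring.
  apply Rmult_le_pos; lra.
Qed.

Lemma div_le_div_of_mul_le (A B C D : R) :
  0 < B -> 0 < D -> A * D <= C * B -> A / B <= C / D.
Proof.
  intros hB hD h.
  replace (A / B) with (A * D * / (B * D)) by (field; lra).
  replace (C / D) with (C * B * / (B * D)) by (field; lra).
  apply Rmult_le_compat_r; [apply Rlt_le, Rinv_0_lt_compat; nra | exact h].
Qed.

Lemma div_lt_div_of_mul_lt (A B C D : R) :
  0 < B -> 0 < D -> A * D < C * B -> A / B < C / D.
Proof.
  intros hB hD h.
  replace (A / B) with (A * D * / (B * D)) by (field; lra).
  replace (C / D) with (C * B * / (B * D)) by (field; lra).
  apply Rmult_lt_compat_r; [apply Rinv_0_lt_compat; nra | exact h].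
Qed.

Lemma sqrt_le_sqr_eq_iff (P M : R) (E : Prop) :
  0 <= P -> 0 <= M -> P <= M ^ 2 -> (P = M ^ 2 <-> E) ->
  sqrt P <= M /\ (sqrt P = M <-> E).
Proof.
  intros hP hM hle heq. rewrite <- (sqrt_pow2 M hM) at 1 2.
  split; [now apply sqrt_le_1_alt|].
  rewrite <- heq. split; [apply sqrt_inj; auto; apply pow2_ge_0 | now intros ->].
Qed.

Lemma inv_le_sqrt_inv_eq_iff (P M : R) (E : Prop) :
  0 < P -> 0 < M -> / P <= M ^ 2 -> (/ P = M ^ 2 <-> E) ->
  1 / M <= sqrt P /\ (1 / M = sqrt P <-> E).
Proof.
  intros hP hM hle heq.
  destruct (sqrt_le_sqr_eq_iff (/ P) M E) as [Hle Heq]; auto with real.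
  rewrite sqrt_inv in Hle, Heq. pose proof (sqrt_lt_R0 P hP).
  rewrite Rdiv_1_l, <- Heq. split.
  - rewrite <- (Rinv_inv (sqrt P)). apply Rinv_le_contravar; auto with real.
  - split; intros e; rewrite <- e, Rinv_inv; reflexivity.
Qed.

Lemma sqrt_mul_bounds (rho x y : R) :
  0 < x < rho -> 0 < y < rho -> 0 < sqrt (x * y) < rho.
Proof.
  intros hx hy. split; [apply sqrt_lt_R0; nra|].
  rewrite <- (sqrt_pow2 rho) by lra. apply sqrt_lt_1_alt. split; nra.
Qed.

Lemma sqrt_compl_bounds (rho x : R) :
  0 < x < rho -> 0 < sqrt (rho ^ 2 - x ^ 2) < rho.
Proof.
  intros hx. split; [apply sqrt_lt_R0; nra|].
  rewrite <- (sqrt_pow2 rho) at 2 by lra. apply sqrt_lt_1_alt. split; nra.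
Qed.

Lemma sqr_div_bounds (rho x : R) : 0 < x < rho -> 0 < x ^ 2 / rho < rho.
Proof.
  intros hx. split; [apply Rdiv_lt_0_compat; nra|].
  apply (Rmult_lt_reg_r rho); [lra|]. unfold Rdiv. rewrite Rmult_assoc, Rinv_l by lra. nra.
Qed.

Lemma midpoint_le_of_derive_nonincr (h h' : R -> R) (s r : R) :
  s < r ->
  (forall c, s <= c <= r -> derivable_pt_lim h c (h' c)) ->
  (forall c1 c2, s <= c1 -> c1 <= c2 -> c2 <= r -> h' c2 <= h' c1) ->
  h s + h r <= 2 * h ((s + r) / 2).
Proof.
  intros hsr hd hmono.
  set (m := (s + r) / 2).
  destruct (MVT_cor2 h h' s m ltac:(unfold m; lra)
    (fun c hc => hd c ltac:(unfold m in hc; lra))) as [c1 [E1 h1]].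
  destruct (MVT_cor2 h h' m r ltac:(unfold m; lra)
    (fun c hc => hd c ltac:(unfold m in hc; lra))) as [c2 [E2 h2]].
  assert (h' c2 <= h' c1) by (apply hmono; unfold m in *; lra).
  assert (m - s = r - m) by (unfold m; field).
  assert (0 < r - m) by (unfold m; lra).
  nra.
Qed.

Definition psum (a : nat -> R) (x : R) (N : nat) : R :=
  sum_f_R0 (fun k => a k * x ^ k) N.

Lemma psum_succ (a : nat -> R) (x : R) (N : nat) :
  psum a x (S N) = psum a x N + a (S N) * x ^ S N.
Proof. reflexivity. Qed.

Lemma is_lim_seq_psum (a : nat -> R) (x : R) :
  ex_pseries a x -> is_lim_seq (psum a x) (PSeries a x).
Proof.
  intros hx. eapply is_lim_seq_ext; [|exact (PSeries_correct a x hx)].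
  intro N. unfold psum. rewrite sum_n_Reals. apply sum_eq. intros i _.
  rewrite pow_n_pow. apply Rmult_comm.
Qed.

Lemma psum_index_mul_succ (b : nat -> R) (x : R) (N : nat) :
  psum (fun k => INR k * b k) x (S N) = x * psum (PS_derive b) x N.
Proof.
  unfold PS_derive. induction N as [|N IH].
  - unfold psum; simpl. ring.
  - rewrite psum_succ, IH, psum_succ. simpl pow. ring.
Qed.

Section GeometricMean.

Variables (a : nat -> R) (u w g : R).
Hypothesis a_nonneg : forall n, 0 <= a n.
Hypotheses (u_ge0 : 0 <= u) (w_ge0 : 0 <= w) (g_ge0 : 0 <= g) (g_geomean : g * g = u * w).

Lemma psum_geomean_cross_le (p N : nat) :
  2 * g ^ p * psum a g N <= u ^ p * psum a w N + w ^ p * psum a u N.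
Proof.
  induction N as [|N IH].
  - pose proof (pow_mix_geomean_le u w g p 0 u_ge0 w_ge0 g_ge0 g_geomean).
    pose proof (a_nonneg O). unfold psum; simpl sum_f_R0 in *. nra.
  - pose proof (pow_mix_geomean_le u w g p (S N) u_ge0 w_ge0 g_ge0 g_geomean).
    pose proof (a_nonneg (S N)). rewrite !psum_succ. nra.
Qed.

Lemma psum_geomean_gap_le_succ (N : nat) :
  psum a u N * psum a w N - psum a g N ^ 2 <=
  psum a u (S N) * psum a w (S N) - psum a g (S N) ^ 2.
Proof.
  rewrite !psum_succ.
  pose proof (psum_geomean_cross_le (S N) N) as Hcross.
  assert (Hpow : u ^ S N * w ^ S N = g ^ S N * g ^ S N)
    by (rewrite <- !Rpow_mult_distr, g_geomean; reflexivity).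
  pose proof (a_nonneg (S N)). nra.
Qed.

End GeometricMean.

Section Chebyshev.

Variables (c a : nat -> R) (v w : R).
Hypothesis c_decr : Un_decreasing c.
Hypothesis a_nonneg : forall n, 0 <= a n.
Hypothesis vw : 0 <= v <= w.

Let ca k := c k * a k.

Lemma psum_weighted_cross_le (p N : nat) : (N <= p)%nat ->
  c p * (w ^ p * psum a v N - v ^ p * psum a w N) <=
  w ^ p * psum ca v N - v ^ p * psum ca w N.
Proof.
  assert (Hterm : forall k, (k <= p)%nat ->
    c p * (w ^ p * (a k * v ^ k) - v ^ p * (a k * w ^ k)) <=
    w ^ p * (ca k * v ^ k) - v ^ p * (ca k * w ^ k)).
  { intros k hk. unfold ca.
    pose proof (decreasing_prop c k p c_decr hk). pose proof (a_nonneg k).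
    pose proof (pow_cross_nonneg v w k p vw hk).
    assert (0 <= a k * (c k - c p) * (w ^ p * v ^ k - v ^ p * w ^ k))
      by (apply Rmult_le_pos; [apply Rmult_le_pos|]; lra).
    nra. }
  induction N as [|N IH]; intros hN.
  - unfold psum; simpl sum_f_R0. apply Hterm; lia.
  - rewrite !psum_succ. specialize (Hterm (S N) hN). specialize (IH ltac:(lia)). nra.
Qed.

Lemma psum_weighted_ratio_antitone (N : nat) :
  psum ca w N * psum a v N <= psum ca v N * psum a w N.
Proof.
  induction N as [|N IH].
  - unfold psum, ca; simpl. nra.
  - pose proof (psum_weighted_cross_le (S N) N ltac:(lia)). pose proof (a_nonneg (S N)).
    rewrite !psum_succ. unfold ca at 2 4. nra.
Qed.

End Chebyshev.

(* [ratio_seq rho a k * a k = rho * (k+1) a_(k+1) - k a_k] is the [k]-th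
   coefficient of [(rho - v) f'(v)]. *)
Definition ratio_seq (rho : R) (a : nat -> R) (n : nat) : R :=
  rho * INR (n + 1) * a (n + 1)%nat / a n - INR n.

Lemma ratio_seq_decreasing (rho : R) (a : nat -> R) :
  (forall n, rho * INR (n + 2) * a (n + 2)%nat / a (n + 1)%nat - INR (n + 1)
             <= rho * INR (n + 1) * a (n + 1)%nat / a n - INR n) ->
  Un_decreasing (ratio_seq rho a).
Proof.
  intros hdec n. unfold ratio_seq.
  replace (S n + 1)%nat with (n + 2)%nat by lia. replace (S n) with (n + 1)%nat by lia.
  apply hdec.
Qed.

(* No positivity is needed: [/ (p / q) = q / p] holds even when [p] or [q] is [0]. *)
Lemma mfun_compl (a : nat -> R) (rho x : R) : rho <> 0 -> x ^ 2 <= rho ^ 2 ->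
  mfun a rho (sqrt (rho ^ 2 - x ^ 2)) = 1 / mfun a rho x.
Proof.
  intros hrho hx. unfold mfun.
  rewrite <- Rsqr_pow2, Rsqr_sqrt by lra.
  replace (rho - (rho ^ 2 - x ^ 2) / rho) with (x ^ 2 / rho) by (field; lra).
  replace ((rho ^ 2 - x ^ 2) / rho) with (rho - x ^ 2 / rho) by (field; lra).
  unfold Rdiv. rewrite Rinv_mult, Rinv_inv. ring.
Qed.

Section PositiveSeries.

Variables (a : nat -> R) (rho : R).
Hypothesis a_pos : forall n, 0 < a n.
Hypothesis a_cvg : forall x, Rabs x < rho -> ex_pseries a x.

Lemma CV_radius_gt_abs (v : R) : Rabs v < rho -> Rbar_lt (Rabs v) (CV_radius a).
Proof.
  intros hv.
  set (r := (Rabs v + rho) / 2).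
  assert (hr : Rabs r = r) by (apply Rabs_pos_eq; unfold r; pose proof (Rabs_pos v); lra).
  assert (Hle : Rbar_le r (CV_radius a)).
  { apply Rbar_not_lt_le. intro H. rewrite <- hr in H. apply (CV_disk_outside a r H).
    eapply is_lim_seq_ext; [|apply ex_series_lim_0, a_cvg; rewrite hr; unfold r; lra].
    intro n. simpl. rewrite pow_n_pow. apply Rmult_comm. }
  destruct (CV_radius a) as [c| |]; simpl in *; auto; unfold r in *; lra.
Qed.

Lemma is_lim_seq_psum_nonneg (v : R) : 0 <= v < rho -> is_lim_seq (psum a v) (PSeries a v).
Proof. intros hv. apply is_lim_seq_psum, a_cvg. rewrite Rabs_pos_eq; lra. Qed.

Lemma PSeries_pos (v : R) : 0 <= v < rho -> 0 < PSeries a v.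
Proof.
  intros hv.
  assert (Hge : forall N, a O <= psum a v N).
  { induction N as [|N IH]; [unfold psum; simpl; lra|].
    rewrite psum_succ. pose proof (a_pos (S N)). pose proof (pow_le v (S N) (proj1 hv)). nra. }
  pose proof (is_lim_seq_le _ _ _ _ Hge (is_lim_seq_const _) (is_lim_seq_psum_nonneg v hv)) as H.
  simpl in H. pose proof (a_pos O). lra.
Qed.

Lemma mfun_pos (x : R) : 0 < x < rho -> 0 < mfun a rho x.
Proof.
  intros hx. pose proof (sqr_div_bounds rho x hx).
  unfold mfun. apply Rdiv_lt_0_compat; apply PSeries_pos; lra.
Qed.

Lemma PSeries_geomean_sqr_lt (u w g : R) :
  0 < u < rho -> 0 < w < rho -> 0 < g -> g * g = u * w -> u <> w ->
  PSeries a g ^ 2 < PSeries a u * PSeries a w.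
Proof.
  intros hu hw hg e huw.
  assert (a_nonneg : forall n, 0 <= a n) by (intro n; apply Rlt_le, a_pos).
  set (gap N := psum a u N * psum a w N - psum a g N ^ 2).
  assert (Hlim : is_lim_seq gap (PSeries a u * PSeries a w - PSeries a g ^ 2)).
  { assert (gR : g < rho) by nra.
    apply (is_lim_seq_ext (fun N => psum a u N * psum a w N - psum a g N * psum a g N));
      [intro N; unfold gap; ring|].
    replace (PSeries a g ^ 2) with (PSeries a g * PSeries a g) by ring.
    apply is_lim_seq_minus'; apply is_lim_seq_mult'; apply is_lim_seq_psum_nonneg; lra. }
  assert (Hmean : 0 < u + w - 2 * g).
  { assert (0 < (u - w) ^ 2) by (apply pow2_gt_0; lra).
    assert ((u + w - 2 * g) * (u + w + 2 * g) = (u - w) ^ 2)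
      by (transitivity ((u + w) ^ 2 - 4 * (g * g)); [ring|rewrite e; ring]).
    nra. }
  assert (Hgap1 : 0 < gap 1%nat).
  { replace (gap 1%nat) with (a O * a 1%nat * (u + w - 2 * g)).
    - pose proof (a_pos O). pose proof (a_pos 1%nat). apply Rmult_lt_0_compat; nra.
    - unfold gap, psum; simpl.
      transitivity (a O * a 1%nat * (u + w - 2 * g) + a 1%nat ^ 2 * (u * w - g * g));
        [rewrite e|]; ring. }
  assert (Hmono : forall N, gap 1%nat <= gap (S N)).
  { induction N as [|N IH]; [lra|]. eapply Rle_trans; [exact IH|].
    apply psum_geomean_gap_le_succ; auto; lra. }
  apply is_lim_seq_incr_1 in Hlim.
  pose proof (is_lim_seq_le _ _ _ _ Hmono (is_lim_seq_const _) Hlim). simpl in *. lra.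
Qed.

Lemma psum_ratio_seq (x : R) (N : nat) :
  psum (fun k => ratio_seq rho a k * a k) x (S N) =
  rho * psum (PS_derive a) x (S N) - x * psum (PS_derive a) x N.
Proof.
  assert (Hk : forall k, ratio_seq rho a k * a k = rho * PS_derive a k - INR k * a k).
  { intro k. unfold ratio_seq, PS_derive. rewrite Nat.add_1_r. field.
    apply Rgt_not_eq, a_pos. }
  rewrite <- psum_index_mul_succ. generalize (S N) as M. clear N.
  induction M as [|M IH]; [unfold psum; cbn [sum_f_R0]; rewrite Hk; simpl; ring|].
  rewrite !psum_succ, IH, Hk. ring.
Qed.

Lemma is_lim_seq_psum_ratio_seq (x : R) : 0 <= x < rho ->
  is_lim_seq (psum (fun k => ratio_seq rho a k * a k) x)
    ((rho - x) * PSeries (PS_derive a) x).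
Proof.
  intros hx.
  assert (L : is_lim_seq (psum (PS_derive a) x) (PSeries (PS_derive a) x)).
  { apply is_lim_seq_psum, ex_pseries_derive, CV_radius_gt_abs.
    rewrite Rabs_pos_eq; lra. }
  apply is_lim_seq_incr_1.
  eapply is_lim_seq_ext; [intro N; symmetry; apply psum_ratio_seq|].
  replace ((rho - x) * PSeries (PS_derive a) x) with
    (rho * PSeries (PS_derive a) x - x * PSeries (PS_derive a) x) by ring.
  apply is_lim_seq_minus'; [apply is_lim_seq_incr_1 in L|];
    exact (is_lim_seq_scal_l _ _ _ L).
Qed.

Lemma is_derive_ln_PSeries_compl_exp (t : R) : exp t < rho ->
  is_derive (fun t => ln (PSeries a (rho - exp t))) t
    (- exp t * PSeries (PS_derive a) (rho - exp t) / PSeries a (rho - exp t)).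
Proof.
  intros ht. pose proof (exp_pos t).
  assert (hr : Rbar_lt (Rabs (rho + - exp t)) (CV_radius a))
    by (apply CV_radius_gt_abs; rewrite Rabs_pos_eq; lra).
  assert (hf : 0 < PSeries a (rho - exp t)) by (apply PSeries_pos; lra).
  auto_derive.
  - repeat split; auto. apply ex_derive_PSeries, hr.
  - change (Derive (fun x => PSeries a x)) with (Derive (PSeries a)).
    rewrite Derive_PSeries by exact hr. unfold Rminus in *. field. lra.
Qed.

Hypothesis ratio_decr : Un_decreasing (ratio_seq rho a).

Lemma PSeries_derive_ratio_antitone (v w : R) : 0 <= v <= w -> w < rho ->
  (rho - w) * PSeries (PS_derive a) w * PSeries a v <=
  (rho - v) * PSeries (PS_derive a) v * PSeries a w.
Proof.
  intros hvw hw.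
  assert (a_nonneg : forall n, 0 <= a n) by (intro n; apply Rlt_le, a_pos).
  refine (is_lim_seq_le _ _ (Finite _) (Finite _)
    (psum_weighted_ratio_antitone _ _ v w ratio_decr a_nonneg hvw) _ _);
    apply is_lim_seq_mult';
    (apply is_lim_seq_psum_ratio_seq || apply is_lim_seq_psum_nonneg); lra.
Qed.

Lemma ln_PSeries_compl_exp_midpoint_le (s r : R) : exp s < rho -> exp r < rho ->
  ln (PSeries a (rho - exp s)) + ln (PSeries a (rho - exp r)) <=
  2 * ln (PSeries a (rho - exp ((s + r) / 2))).
Proof.
  assert (exp_le : forall s t, s <= t -> exp s <= exp t)
    by (intros s' t [hst | <-]; [apply Rlt_le, exp_increasing|]; lra).
  enough (Hlt : forall s r, s < r -> exp r < rho ->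
    ln (PSeries a (rho - exp s)) + ln (PSeries a (rho - exp r)) <=
    2 * ln (PSeries a (rho - exp ((s + r) / 2)))).
  { intros hs hr. destruct (Rtotal_order s r) as [hsr|[<-|hrs]].
    - now apply Hlt.
    - replace ((s + s) / 2) with s by field. lra.
    - rewrite Rplus_comm, (Rplus_comm s). now apply Hlt. }
  clear s r. intros s r hsr hr.
  apply (midpoint_le_of_derive_nonincr (fun t => ln (PSeries a (rho - exp t)))
    (fun t => - exp t * PSeries (PS_derive a) (rho - exp t) / PSeries a (rho - exp t))).
  - exact hsr.
  - intros c hc. apply is_derive_Reals, is_derive_ln_PSeries_compl_exp.
    apply Rle_lt_trans with (exp r); [apply exp_le|]; lra.
  - intros c1 c2 _ h12 h2. apply exp_le in h12, h2. pose proof (exp_pos c1).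
    pose proof (PSeries_derive_ratio_antitone (rho - exp c2) (rho - exp c1)
      ltac:(lra) ltac:(lra)) as M.
    replace (rho - (rho - exp c1)) with (exp c1) in M by ring.
    replace (rho - (rho - exp c2)) with (exp c2) in M by ring.
    rewrite <- !Ropp_mult_distr_l, !Rdiv_opp_l. apply Ropp_le_contravar.
    apply div_le_div_of_mul_le; try apply PSeries_pos; lra.
Qed.

Lemma PSeries_compl_geomean_le (u w g : R) :
  0 < u < rho -> 0 < w < rho -> 0 < g -> g * g = u * w ->
  PSeries a (rho - u) * PSeries a (rho - w) <= PSeries a (rho - g) ^ 2.
Proof.
  intros hu hw hg e.
  assert (Hg : (ln u + ln w) / 2 = ln g)
    by (rewrite <- ln_mult, <- e, ln_mult by lra; field).
  pose proof (ln_PSeries_compl_exp_midpoint_le (ln u) (ln w)) as Hmid.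
  rewrite Hg, !exp_ln in Hmid by lra. specialize (Hmid ltac:(lra) ltac:(lra)).
  pose proof (PSeries_pos (rho - u) ltac:(lra)). pose proof (PSeries_pos (rho - w) ltac:(lra)).
  pose proof (PSeries_pos (rho - g) ltac:(nra)).
  rewrite <- ln_mult in Hmid by lra.
  replace (2 * ln (PSeries a (rho - g))) with (ln (PSeries a (rho - g) ^ 2)) in Hmid
    by (rewrite ln_pow by lra; simpl; ring).
  apply Rnot_lt_le. intros Hlt. apply ln_increasing in Hlt; [lra|]. nra.
Qed.

Lemma mfun_mul_le_sqr (x y : R) : 0 < x < rho -> 0 < y < rho ->
  mfun a rho x * mfun a rho y <= mfun a rho (sqrt (x * y)) ^ 2 /\
  (x <> y -> mfun a rho x * mfun a rho y < mfun a rho (sqrt (x * y)) ^ 2).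
Proof.
  intros hx hy.
  pose proof (sqr_div_bounds rho x hx) as hu. pose proof (sqr_div_bounds rho y hy) as hw.
  set (u := x ^ 2 / rho) in *. set (w := y ^ 2 / rho) in *. set (g := x * y / rho).
  assert (hg : 0 < g) by (apply Rdiv_lt_0_compat; nra).
  assert (e : g * g = u * w) by (unfold g, u, w; field; lra).
  assert (Eg : sqrt (x * y) ^ 2 / rho = g)
    by (rewrite <- Rsqr_pow2, Rsqr_sqrt by nra; reflexivity).
  assert (Huw : x <> y -> u <> w).
  { intros hxy E. apply hxy. unfold u, w in E.
    assert (x ^ 2 = y ^ 2)
      by (apply (Rmult_eq_reg_r (/ rho)); [exact E | apply Rinv_neq_0_compat; lra]).
    nra. }
  pose proof (PSeries_compl_geomean_le u w g hu hw hg e) as Hnum.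
  pose proof (PSeries_geomean_sqr_lt u w g hu hw hg e) as Hden.
  assert (Hden_le : PSeries a g ^ 2 <= PSeries a u * PSeries a w).
  { destruct (Req_dec u w) as [<-|huw]; [|now apply Rlt_le, Hden].
    replace g with u by nra. simpl; lra. }
  unfold mfun. rewrite Eg. fold u w.
  pose proof (PSeries_pos u ltac:(lra)). pose proof (PSeries_pos w ltac:(lra)).
  pose proof (PSeries_pos g ltac:(nra)).
  pose proof (PSeries_pos (rho - u) ltac:(lra)). pose proof (PSeries_pos (rho - w) ltac:(lra)).
  replace (PSeries a (rho - u) / PSeries a u * (PSeries a (rho - w) / PSeries a w))
    with (PSeries a (rho - u) * PSeries a (rho - w) / (PSeries a u * PSeries a w))
    by (field; lra).
  replace ((PSeries a (rho - g) / PSeries a g) ^ 2)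
    with (PSeries a (rho - g) ^ 2 / PSeries a g ^ 2) by (field; lra).
  assert (0 < PSeries a (rho - u) * PSeries a (rho - w)) by nra.
  assert (0 < PSeries a g ^ 2) by (apply pow_lt; lra).
  split.
  - apply div_le_div_of_mul_le; nra.
  - intros hxy. specialize (Hden (Huw hxy)). apply div_lt_div_of_mul_lt; [nra|lra|].
    apply Rlt_le_trans
      with (PSeries a (rho - u) * PSeries a (rho - w) * (PSeries a u * PSeries a w));
      [apply Rmult_lt_compat_l|apply Rmult_le_compat_r]; nra.
Qed.

Lemma mfun_mul_eq_sqr_iff (x y : R) : 0 < x < rho -> 0 < y < rho ->
  mfun a rho x * mfun a rho y = mfun a rho (sqrt (x * y)) ^ 2 <-> x = y.
Proof.
  intros hx hy. split.
  - intros Heq. destruct (Req_dec x y) as [|hxy]; [assumption|].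
    pose proof (proj2 (mfun_mul_le_sqr x y hx hy) hxy). lra.
  - intros <-. rewrite sqrt_square by lra. ring.
Qed.

End PositiveSeries.

Theorem theorem1p5 (R0 : R) (a : nat -> R)
  (hR : 0 < R0)
  (hpos : forall n, 0 < a n)
  (hconv : forall x, Rabs x < R0 -> ex_pseries a x)
  (hdec : forall n,
     R0 * INR (n + 2) * a (n + 2)%nat / a (n + 1)%nat - INR (n + 1)
     <= R0 * INR (n + 1) * a (n + 1)%nat / a n - INR n) :
  forall x y, 0 < x < R0 -> 0 < y < R0 ->
    let m := mfun a R0 in
    let z := sqrt (sqrt ((R0 ^ 2 - x ^ 2) * (R0 ^ 2 - y ^ 2))) in
    (1 / m z <= sqrt (m x * m y) /\ sqrt (m x * m y) <= m (sqrt (x * y))) /\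
    (1 / m z = sqrt (m x * m y) <-> x = y) /\
    (sqrt (m x * m y) = m (sqrt (x * y)) <-> x = y).
Proof.
  intros x y hx hy m z.
  pose proof (ratio_seq_decreasing R0 a hdec) as hdecr.
  pose proof (sqrt_compl_bounds R0 x hx) as hx'.
  pose proof (sqrt_compl_bounds R0 y hy) as hy'.
  set (x' := sqrt (R0 ^ 2 - x ^ 2)) in *. set (y' := sqrt (R0 ^ 2 - y ^ 2)) in *.
  assert (Ez : z = sqrt (x' * y')) by (unfold z, x', y'; rewrite sqrt_mult by nra; reflexivity).
  assert (Ex' : x' = y' <-> x = y).
  { split; [|now intros <-]. intros E. apply sqrt_inj in E; nra. }
  assert (hmx : 0 < m x) by (apply (mfun_pos a R0 hpos hconv x hx)).
  assert (hmy : 0 < m y) by (apply (mfun_pos a R0 hpos hconv y hy)).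
  destruct (mfun_mul_le_sqr a R0 hpos hconv hdecr x y hx hy) as [Hle _].
  destruct (mfun_mul_le_sqr a R0 hpos hconv hdecr x' y' hx' hy') as [Hle' _].
  pose proof (mfun_mul_eq_sqr_iff a R0 hpos hconv hdecr x y hx hy) as Heq.
  pose proof (mfun_mul_eq_sqr_iff a R0 hpos hconv hdecr x' y' hx' hy') as Heq'.
  rewrite <- Ez, Ex' in Heq'. rewrite <- Ez in Hle'. unfold x', y' in Hle', Heq'.
  rewrite !mfun_compl, !Rdiv_1_l, <- Rinv_mult in Hle', Heq' by nra.
  fold m in Hle, Heq, Hle', Heq'.
  assert (hmz : 0 < m z)
    by (apply (mfun_pos a R0 hpos hconv); rewrite Ez; now apply sqrt_mul_bounds).
  assert (hmxy : 0 < m (sqrt (x * y)))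
    by (apply (mfun_pos a R0 hpos hconv); now apply sqrt_mul_bounds).
  pose proof (inv_le_sqrt_inv_eq_iff (m x * m y) (m z) (x = y) ltac:(nra) hmz Hle' Heq').
  pose proof (sqrt_le_sqr_eq_iff (m x * m y) (m (sqrt (x * y))) (x = y)
    ltac:(nra) (Rlt_le _ _ hmxy) Hle Heq).
  tauto.
Qed.
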